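(* Let $A\subseteq\mathbb{N}$ be a set whose natural density $\mathrm{dens}(A)$ exists and is positive, and let $m,\gamma$ be integers with $2\le\gamma<m$. Then for every $k\ge 1$, \[ \underline{\mathrm{dens}}\Big(A\cap \bigcup_{n\in R_k}\big([m^n,\gamma m^n]\cap\mathbb{N}\big)\Big)>0, \] where $R_k=\{2^{k-1}(2j+1): j\in\mathbb{N}_0\}$.
   Context: $\mathbb{N}=\{1,2,\dots\}$, $\mathbb{N}_0=\mathbb{N}\cup\{0\}$. For $A\subseteq\mathbb{N}$, $\underline{\mathrm{dens}}(A)=\liminf_{n\to\infty}\#(A\cap[1,n])/n$ and $\mathrm{dens}(A)=\lim_{n\to\infty}\#(A\cap[1,n])/n$ when this limit exists. Equivalently, $R_k=\{n\in\mathbb{N}: v_2(n)+1=k\}$ where $v_2$ is the $2$-adic valuation. *)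

From Stdlib Require Import Reals Arith ClassicalDescription.
From Coquelicot Require Import Coquelicot.
Open Scope R_scope.

(* Subsets of N = {1,2,...} are predicates on nat (0 is never counted). *)

Fixpoint count_upto (A : nat -> Prop) (n : nat) : nat :=
  match n with
  | O => O
  | S k => (count_upto A k + (if excluded_middle_informative (A (S k)) then 1 else 0))%nat
  end.

Definition dens_seq (A : nat -> Prop) (n : nat) : R :=
  INR (count_upto A n) / INR n.

Definition has_dens (A : nat -> Prop) (d : R) : Prop :=
  is_lim_seq (dens_seq A) d.

Definition lower_dens (A : nat -> Prop) : Rbar := LimInf_seq (dens_seq A).

Definition R_set (k : nat) (n : nat) : Prop :=
  exists j : nat, n = (2 ^ (k - 1) * (2 * j + 1))%nat.

Definition cut_set (A : nat -> Prop) (m gamma k : nat) (x : nat) : Prop :=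
  A x /\ exists n : nat, R_set k n /\ (m ^ n <= x)%nat /\ (x <= gamma * m ^ n)%nat.

From Stdlib Require Import Reals Lia Lra Psatz ClassicalDescription.
From Coquelicot Require Import Coquelicot.
Open Scope R_scope.

(* Write p_j = m^(n_j) with n_j = 2^(k-1) (2j+1), the j-th element of R_k.
   Since dens(A) = d > 0 and gamma >= 2, the block (p_j, gamma p_j] contains at
   least d p_j / 2 elements of A for large j, and all of them lie in the cut set.
   Consecutive checkpoints gamma p_j grow by the fixed factor M = m^(2^k), so
   every N between gamma p_j and gamma p_(j+1) sees at least d p_j / 2 elements
   of the cut set below it, i.e. a proportion at least d / (2 gamma M). *)

Lemma count_upto_le_mono (A : nat -> Prop) (a b : nat) :
  (a <= b)%nat -> (count_upto A a <= count_upto A b)%nat.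
Proof.
  induction 1 as [|b _ IH]; simpl; [lia|].
  destruct (excluded_middle_informative _); lia.
Qed.

Lemma count_upto_gap_le (A B : nat -> Prop) (a b : nat) :
  (a <= b)%nat -> (forall x, (a < x <= b)%nat -> A x -> B x) ->
  (count_upto A b + count_upto B a <= count_upto A a + count_upto B b)%nat.
Proof.
  induction 1 as [|b hab IH]; intros hAB; [lia|].
  specialize (IH (fun x hx => hAB x ltac:(lia))); simpl.
  destruct (excluded_middle_informative (A (S b))) as [HA|HA];
  destruct (excluded_middle_informative (B (S b))) as [HB|HB]; try lia.
  exfalso; apply HB, hAB; [lia | exact HA].
Qed.

Lemma has_dens_count_gap (A : nat -> Prop) (d : R) (g : nat) :
  has_dens A d -> 0 < d -> (2 <= g)%nat ->
  exists N0, forall p, (N0 <= p)%nat ->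
    d / 2 * INR p <= INR (count_upto A (g * p)) - INR (count_upto A p).
Proof.
  intros hd hdpos hg.
  (* Tolerance d/6 suffices: (5/6) d g p - (7/6) d p >= d p / 2 when g >= 2. *)
  assert (hd6 : 0 < d / 6) by lra.
  destruct (proj2 (is_lim_seq_spec _ _) hd (mkposreal _ hd6)) as [N0 HN0]; simpl in HN0.
  exists (S N0); intros p hp.
  assert (hpR : 1 <= INR p) by (apply (le_INR 1); lia).
  assert (hgR : 2 <= INR g) by (apply (le_INR 2); lia).
  assert (hlo := HN0 p ltac:(lia)).
  assert (hhi := HN0 (g * p)%nat ltac:(nia)).
  unfold dens_seq in hlo, hhi; rewrite mult_INR in hhi.
  apply Rabs_def2 in hlo as [hlo _]; apply Rabs_def2 in hhi as [_ hhi].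
  assert (hlo' : INR (count_upto A p) < (d + d / 6) * INR p)
    by (apply Rlt_div_l; lra).
  assert (hhi' : (d - d / 6) * (INR g * INR p) < INR (count_upto A (g * p)))
    by (apply Rlt_div_r; nra).
  assert (hgp : 2 * INR p <= INR g * INR p) by (apply Rmult_le_compat_r; lra).
  nra.
Qed.

Lemma exists_bracket (f : nat -> nat) (J N : nat) :
  (forall j, (j < f j)%nat) -> (f J <= N)%nat ->
  exists j, (J <= j)%nat /\ (f j <= N < f (S j))%nat.
Proof.
  intros hf hJ.
  enough (H : forall t, (N < f (J + t))%nat ->
            exists j, (J <= j)%nat /\ (f j <= N < f (S j))%nat)
    by (apply (H N); specialize (hf (J + N)%nat); lia).
  induction t as [|t IH]; intros ht; [rewrite Nat.add_0_r in ht; lia|].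
  destruct (Nat.lt_ge_cases N (f (J + t)%nat)) as [hlt|hge]; [exact (IH hlt)|].
  exists (J + t)%nat; rewrite <- Nat.add_succ_r; split; lia.
Qed.

Lemma lower_dens_ge_checkpoints (C : nat -> Prop) (f : nat -> nat) (J : nat) (c M : R) :
  (forall j, (j < f j)%nat) -> 0 <= c -> 0 < M ->
  (forall j, INR (f (S j)) <= M * INR (f j)) ->
  (forall j, (J <= j)%nat -> c * INR (f j) <= INR (count_upto C (f j))) ->
  Rbar_le (c / M) (lower_dens C).
Proof.
  intros hf hc hM hgrowth hcount.
  rewrite <- LimInf_seq_const; apply LimInf_le.
  exists (f J); intros N hN.
  destruct (exists_bracket f J N hf hN) as [j [hj [hlo hhi]]].
  assert (hNpos : 0 < INR N) by (apply lt_0_INR; specialize (hf j); lia).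
  assert (hNfj : INR N < M * INR (f j))
    by (apply Rlt_le_trans with (INR (f (S j))); [apply lt_INR|]; auto).
  assert (hmono : INR (count_upto C (f j)) <= INR (count_upto C N))
    by (apply le_INR, count_upto_le_mono, hlo).
  specialize (hcount j hj).
  unfold dens_seq; apply (Rle_div_r _ _ _ hNpos).
  apply Rle_trans with (c / M * (M * INR (f j))).
  - apply Rmult_le_compat_l; [apply Rdiv_le_0_compat|]; lra.
  - replace (c / M * (M * INR (f j))) with (c * INR (f j)) by (field; lra); lra.
Qed.

Theorem lemma2p2 (A : nat -> Prop) (d : R) (m gamma : nat)
  (hA0 : forall x, A x -> (1 <= x)%nat)
  (hd : has_dens A d) (hdpos : 0 < d)
  (hg : (2 <= gamma)%nat) (hgm : (gamma < m)%nat) :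
  forall k : nat, (1 <= k)%nat ->
    Rbar_lt (Finite 0) (lower_dens (cut_set A m gamma k)).
Proof.
  intros k _.
  set (L := (2 ^ (k - 1))%nat).
  set (p := fun j => (m ^ (L * (2 * j + 1)))%nat).
  set (M := (m ^ (2 * L))%nat).
  assert (hLpos : (1 <= L)%nat) by (pose proof (Nat.pow_nonzero 2 (k - 1) ltac:(lia)); lia).
  assert (hp : forall j, (j < p j)%nat)
    by (intro j; pose proof (Nat.pow_gt_lin_r m (L * (2 * j + 1)) ltac:(lia)); unfold p; nia).
  assert (hpS : forall j, p (S j) = (p j * M)%nat)
    by (intro j; unfold p, M; rewrite <- Nat.pow_add_r; f_equal; lia).
  assert (hMpos : 0 < INR M) by (apply lt_0_INR, Nat.neq_0_lt_0, Nat.pow_nonzero; lia).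
  assert (hgR : 0 < INR gamma) by (apply lt_0_INR; lia).
  destruct (has_dens_count_gap A d gamma hd hdpos hg) as [N0 hgap].
  apply Rbar_lt_le_trans with (Finite (d / (2 * INR gamma) / INR M)).
  { simpl; apply Rdiv_lt_0_compat; [apply Rdiv_lt_0_compat|]; lra. }
  apply (lower_dens_ge_checkpoints _ (fun j => gamma * p j)%nat N0); try lra.
  - intro j; specialize (hp j); nia.
  - apply Rdiv_le_0_compat; lra.
  - intro j; rewrite hpS, !mult_INR; lra.
  - intros j hj.
    assert (hcut : forall x, (p j < x <= gamma * p j)%nat -> A x -> cut_set A m gamma k x)
      by (intros x hx hAx; split; [exact hAx|]; exists (L * (2 * j + 1))%nat;
          split; [exists j; reflexivity | unfold p in hx; lia]).
    pose proof (le_INR _ _ (count_upto_gap_le _ _ (p j) (gamma * p j) ltac:(nia) hcut)) as hblock.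
    pose proof (hgap (p j) ltac:(specialize (hp j); lia)) as hA.
    pose proof (pos_INR (count_upto (cut_set A m gamma k) (p j))).
    rewrite !plus_INR in hblock; rewrite mult_INR.
    replace (d / (2 * INR gamma) * (INR gamma * INR (p j))) with (d / 2 * INR (p j))
      by (field; lra).
    lra.
Qed.
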